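(* Let $P$ be a nilpotent linear operator on a finite-dimensional real or complex symplectic vector space $(V, B)$, self-adjoint with respect to $B$, and suppose that $(V, B, P)$ is a direct sum of Jordan blocks all of the same height $k$. Then the subspaces of $V$ invariant under $\mathrm{Aut}(V, B, P)$ are exactly the subspaces $\operatorname{Ker} P^i = \operatorname{Im} P^{k-i}$, $0 \le i \le k$.
   Context: $P$ self-adjoint with respect to $B$ means $B(Pu,v) = B(u,Pv)$. $\mathrm{Aut}(V,B,P)$ is the group of linear automorphisms of $V$ preserving $B$ and commuting with $P$. A Jordan block of height $k$ (with eigenvalue $0$) is a $2k$-dimensional $B$-orthogonal summand with a basis in which $B = \begin{pmatrix} 0 & E_k \\ -E_k & 0\end{pmatrix}$ and the form $A(u,v) = B(Pu,v)$ has matrix $\begin{pmatrix} 0 & J_k(0) \\ -J_k(0)^T & 0\end{pmatrix}$, where $J_k(0)$ is the nilpotent $k\times k$ Jordan cell; on such a block $P$ acts as two nilpotent Jordan cells of size $k$. ''$(V,B,P)$ is a direct sum of such blocks'' means $V$ decomposes into a $B$-orthogonal, $P$-invariant direct sum of such blocks. *)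

From HB Require Import structures.
From mathcomp Require Import all_boot all_order all_algebra.
From mathcomp Require Import complex.
From mathcomp Require Import reals.
Set Implicit Arguments. Unset Strict Implicit. Unset Printing Implicit Defensive.
Import Order.TTheory GRing.Theory Num.Theory.
Local Open Scope ring_scope.

Definition real_or_complex (K : fieldType) : Prop :=
  exists R : realType,
    (exists f : {rmorphism R -> K}, bijective f) \/
    (exists f : {rmorphism R[i] -> K}, bijective f).

(* Conventions: V = 'rV[K]_n (row vectors), operators act on the right:
   P acts as u |-> u *m P.  The bilinear form with Gram matrix B is
   B(u,v) = u *m B *m v^T. *)

(* Gram matrix of the standard form on one Jordan block of height k
   (indices 0..2k-1): [[0, E_k], [-E_k, 0]]. *)
Definition blockB (K : fieldType) (k a b : nat) : K :=
  if (a < k)%N && (k <= b)%N && (b - k == a)%N then 1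
  else if (k <= a)%N && (b < k)%N && (a - k == b)%N then -1
  else 0.

Definition jordan0 (K : fieldType) (a c : nat) : K := if c == a.+1 then 1 else 0.

(* Gram matrix of A(u,v) = B(Pu,v) on one block: [[0, J_k(0)], [-J_k(0)^T, 0]]. *)
Definition blockA (K : fieldType) (k a b : nat) : K :=
  if (a < k)%N && (k <= b)%N then jordan0 K a (b - k)
  else if (k <= a)%N && (b < k)%N then - jordan0 K b (a - k)
  else 0.

(* Block-diagonal sums of (arbitrarily many) copies, indexed by 'I_n with
   n a multiple of 2k: consecutive index blocks of length 2k. *)
Definition stdB (K : fieldType) (n k : nat) : 'M[K]_n :=
  \matrix_(i, j) (if (i %/ (2 * k) == j %/ (2 * k))%N
                  then blockB K k (i %% (2 * k)) (j %% (2 * k)) else 0).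
Definition stdA (K : fieldType) (n k : nat) : 'M[K]_n :=
  \matrix_(i, j) (if (i %/ (2 * k) == j %/ (2 * k))%N
                  then blockA K k (i %% (2 * k)) (j %% (2 * k)) else 0).

Definition symplectic (K : fieldType) (n : nat) (B : 'M[K]_n) : Prop :=
  B^T = - B /\ B \in unitmx.

Definition self_adjoint (K : fieldType) (n : nat) (B P : 'M[K]_n) : Prop :=
  forall u v : 'rV[K]_n, (u *m P) *m B *m v^T = u *m B *m (v *m P)^T.

Definition nilpotent_mx (K : fieldType) (n : nat) (P : 'M[K]_n) : Prop :=
  exists r : nat, P ^+ r = 0.

(* (V,B,P) is a direct sum of Jordan blocks all of height k: there is a basis
   (rows of the invertible matrix S) in which B and A = B(P.,.) have the
   standard block-diagonal Gram matrices. *)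
Definition jordan_blocks_of_height (K : fieldType) (n : nat) (B P : 'M[K]_n)
    (k : nat) : Prop :=
  (2 * k %| n)%N /\
  exists S : 'M[K]_n, S \in unitmx /\
    S *m B *m S^T = stdB K n k /\ S *m (P *m B) *m S^T = stdA K n k.

Definition in_Aut (K : fieldType) (n : nat) (B P g : 'M[K]_n) : Prop :=
  g \in unitmx /\ (forall u v : 'rV[K]_n, (u *m g) *m B *m (v *m g)^T = u *m B *m v^T)
  /\ P *m g = g *m P.

Definition Aut_invariant (K : fieldType) (n : nat) (B P U : 'M[K]_n) : Prop :=
  forall g, in_Aut B P g -> (U *m g <= U)%MS.

From HB Require Import structures.
From mathcomp Require Import all_boot all_order all_algebra.
From mathcomp Require Import complex reals.
From mathcomp Require Import zify ring.
Set Implicit Arguments. Unset Strict Implicit.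
Import GRing.Theory Num.Theory.
Local Open Scope ring_scope.

(** In a basis adapted to the Jordan blocks, [B] and [P] become the standard
   block forms [stdB] and [stdN], and [stdN] maps each standard basis vector to
   the next vector of its Jordan chain.  For a nilpotent [N] with [N ^+ k = 0]
   and [ker N <= Im N ^+ k.-1], the kernels of the powers of [N] are the images
   of the complementary powers.  Every element of the algebra spanned by
   Aut(V, B, N) commutes with [N] and stabilises every Aut-invariant subspace
   [U].  This algebra contains [N] itself (as [-(Z sigma + sigma Z)], where
   [sigma] and [1 + Z] are automorphisms), the permutations of the blocks and
   the projections onto a single Jordan cell; hence it maps any nonzero vector
   of [ker N] onto every standard basis vector of [ker N].  If [h] is minimal
   with [U <= ker N ^+ h], pick [u] in [U] with [u N ^+ h.-1 != 0]: applying
   the algebra to [u N ^+ h.-1] gives [ker N <= U N ^+ j] for [j < h], and an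
   induction on the exponent yields [ker N ^+ h <= U]. *)

Lemma kermx1 (K : fieldType) (p : nat) : kermx (1%:M : 'M[K]_p) = 0.
Proof. by rewrite -[kermx _]mulmx1 mulmx_ker. Qed.

Section AutAlgebra.
Variables (K : fieldType) (p : nat) (B N : 'M[K]_p).

Lemma isometry_mxP (g : 'M[K]_p) :
  (forall u v : 'rV[K]_p, (u *m g) *m B *m (v *m g)^T = u *m B *m v^T) <->
  g *m B *m g^T = B.
Proof.
split=> [isog | gBg u v]; last first.
  by rewrite trmx_mul !mulmxA -(mulmxA u g) -(mulmxA u (g *m B)) gBg.
apply/matrixP=> i j.
have := congr1 (fun M : 'M_1 => M 0 0) (isog (delta_mx 0 i) (delta_mx 0 j)).
have entry (A : 'M[K]_p) :
    ((delta_mx 0 i : 'rV_p) *m A *m (delta_mx j 0 : 'cV_p)) 0 0 = A i j.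
  by rewrite -rowE -colE !mxE.
by rewrite /= !trmx_mul !trmx_delta !mulmxA -(mulmxA _ g) -(mulmxA _ (g *m B)) !entry.
Qed.

Lemma in_Aut_mx (g : 'M[K]_p) :
  B \in unitmx -> g *m B *m g^T = B -> comm_mx N g -> in_Aut B N g.
Proof.
move=> B_unit gBg Ng; split; [|split] => //; last exact/isometry_mxP.
by move: B_unit; rewrite -{1}gBg !unitmx_mul => /andP [/andP []].
Qed.

Inductive Aut_alg : 'M[K]_p -> Prop :=
  | Aut_alg_Aut g of in_Aut B N g : Aut_alg g
  | Aut_alg_add C D of Aut_alg C & Aut_alg D : Aut_alg (C + D)
  | Aut_alg_mul C D of Aut_alg C & Aut_alg D : Aut_alg (C *m D)
  | Aut_alg_scale a C of Aut_alg C : Aut_alg (a *: C).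

Lemma Aut_alg1 : Aut_alg 1%:M.
Proof.
apply: Aut_alg_Aut; split; first exact: unitmx1.
by split=> [u v|]; rewrite ?mulmx1 ?mul1mx.
Qed.

Lemma Aut_alg_exp C j : Aut_alg C -> Aut_alg (C ^+ j).
Proof.
move=> algC; elim: j => [|j IHj]; first exact: Aut_alg1.
by rewrite exprS -mulmxE; apply: Aut_alg_mul.
Qed.

Lemma Aut_alg_sub_scalar C a : Aut_alg C -> Aut_alg (C - a%:M).
Proof.
by move=> algC; rewrite -scalemx1 -scaleNr; apply/Aut_alg_add/Aut_alg_scale/Aut_alg1.
Qed.

Lemma Aut_alg_comm C : Aut_alg C -> comm_mx N C.
Proof.
elim=> [g [_ [_ Ng]] | {}C D _ NC _ ND | {}C D _ NC _ ND | a {}C _ NC] //.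
- exact: comm_mxD.
- exact: comm_mxM.
- by rewrite /comm_mx -scalemxAl -scalemxAr NC.
Qed.

Lemma Aut_alg_stable U C : Aut_invariant B N U -> Aut_alg C -> stablemx U C.
Proof.
move=> invU; elim=> [g /invU // | {}C D _ UC _ UD | {}C D _ UC _ UD | a {}C _ UC].
- by rewrite mulmxDr addmx_sub.
- by rewrite mulmxA (submx_trans (submxMr D UC)).
- by rewrite -scalemxAr scalemx_sub.
Qed.

Lemma kermxX_Aut_invariant i : Aut_invariant B N (kermx (N ^+ i)).
Proof.
move=> g [_ [_ Ng]]; apply: comm_mx_stable_ker.
by rewrite comm_mxE; apply/commr_sym/commrX/commr_sym; rewrite /GRing.comm -!mulmxE.
Qed.

End AutAlgebra.

Section NilpotentKernels.
Variables (K : fieldType) (p : nat) (N : 'M[K]_p).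

Lemma kermxX_sub r (W : 'M[K]_(r, p)) h :
  (forall j, (j < h)%N -> (kermx N <= W *m N ^+ j)%MS) -> (kermx (N ^+ h) <= W)%MS.
Proof.
elim: h => [|h IHh] kerNW; first by rewrite expr0 kermx1 sub0mx.
set X := kermx (N ^+ h.+1).
have /submxP [Y XNh] : (X *m N ^+ h <= W *m N ^+ h)%MS.
  apply: submx_trans (kerNW h (ltnSn h)).
  by rewrite sub_kermx -mulmxA mulmxE -exprSr -mulmxE mulmx_ker.
have XYW : (X - Y *m W <= kermx (N ^+ h))%MS.
  by rewrite sub_kermx mulmxBl XNh mulmxA subrr.
rewrite -(subrK (Y *m W) X) addmx_sub ?submxMl //.
by apply: submx_trans XYW (IHh _) => j /ltnW; apply: kerNW.
Qed.

Lemma kermxX_eq_imX k : N ^+ k = 0 -> (kermx N <= N ^+ k.-1)%MS ->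
  forall i, (i <= k)%N -> (kermx (N ^+ i) == N ^+ (k - i))%MS.
Proof.
move=> Nk kerN i le_ik; apply/andP; split.
  apply: kermxX_sub => j lt_ji; apply: submx_trans kerN _.
  have -> : N ^+ k.-1 = N ^+ (i.-1 - j) *m (N ^+ (k - i) *m N ^+ j).
    by rewrite !mulmxE -!exprD; congr (_ ^+ _); lia.
  exact: submxMl.
by rewrite sub_kermx mulmxE -exprD subnK // Nk.
Qed.

End NilpotentKernels.

Definition Aut_invariants_are_kernels (K : fieldType) (p : nat) (B P : 'M[K]_p)
    (k : nat) : Prop :=
  (forall i, (i <= k)%N -> (kermx (P ^+ i) == P ^+ (k - i))%MS) /\
  (forall U, Aut_invariant B P U <-> exists2 i, (i <= k)%N & (U == kermx (P ^+ i))%MS).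

Section KernelFlag.
Variables (K : fieldType) (p k : nat) (B N : 'M[K]_p).
Hypotheses (Nk : N ^+ k = 0) (kerN_im : (kermx N <= N ^+ k.-1)%MS).
Hypothesis N_Aut_alg : Aut_alg B N N.
Hypothesis kermx_generated : forall (w : 'rV[K]_p) r (V : 'M[K]_(r, p)),
  w != 0 -> w *m N = 0 -> (forall C, Aut_alg B N C -> (w *m C <= V)%MS) ->
  (kermx N <= V)%MS.

Lemma Aut_invariant_kermx_sub U h : Aut_invariant B N U ->
  (U <= kermx (N ^+ h.+1))%MS -> ~~ (U <= kermx (N ^+ h))%MS ->
  (kermx (N ^+ h.+1) <= U)%MS.
Proof.
move=> invU UNh1 UNh.
have [r uNh] : exists r, row r U *m N ^+ h != 0.
  apply/existsP; move: UNh; apply: contraR => /existsPn uNh0.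
  apply/sub_kermxP/row_matrixP => r; rewrite row_mul row0.
  by have /negPn/eqP := uNh0 r.
apply: kermxX_sub => j lt_jh1; apply: kermx_generated uNh _ _.
  rewrite -mulmxA mulmxE -exprSr -row_mul.
  by move/sub_kermxP: UNh1 => ->; rewrite row0.
move=> C algC; rewrite -mulmxA.
have -> : N ^+ h *m C = (N ^+ (h - j) *m C) *m N ^+ j.
  have := Aut_alg_comm algC; rewrite comm_mxE => /commr_sym/(commrX j)/commr_sym NjC.
  by rewrite !mulmxE -mulrA -NjC mulrA -exprD subnK.
rewrite mulmxA submxMr // (submx_trans (submxMr _ (row_sub r U))) //.
exact/(Aut_alg_stable invU)/Aut_alg_mul/algC/Aut_alg_exp.
Qed.

Theorem Aut_invariants_are_kernels_of_generated : Aut_invariants_are_kernels B N k.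
Proof.
split=> [|U]; first exact: kermxX_eq_imX.
split=> [invU | [i _ /eqmxP eqU] g Autg]; last first.
  by rewrite (eqmxMr g eqU) eqU; apply: kermxX_Aut_invariant Autg.
have UNk : (U <= kermx (N ^+ k))%MS by rewrite Nk kermx0 submx1.
have [h UNh min_h] := ex_minnP (ex_intro (fun h => U <= kermx (N ^+ h))%MS k UNk).
exists h; first exact: min_h UNk.
apply/andP; split=> //; case: h UNh min_h => [|h] UNh min_h.
  by rewrite expr0 kermx1 sub0mx.
by apply: Aut_invariant_kermx_sub => //; apply/negP => /min_h; rewrite ltnn.
Qed.

End KernelFlag.

Section ChangeOfBasis.
Variables (K : fieldType) (p : nat) (S : 'M[K]_p).
Hypothesis S_unit : S \in unitmx.
Local Notation Q := (invmx S).

Lemma conjmxX (A : 'M[K]_p) j : (S *m A *m Q) ^+ j = S *m A ^+ j *m Q.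
Proof.
elim: j => [|j IHj]; first by rewrite !expr0 mulmx1 mulmxV.
by rewrite !exprS -!mulmxE IHj !mulmxA (mulmxKV S_unit).
Qed.

Lemma eqmx_conj (A : 'M[K]_p) : (S *m A *m Q :=: A *m Q)%MS.
Proof. by rewrite -mulmxA; apply: eqmxMfull; rewrite row_full_unit. Qed.

Lemma kermx_conj (A : 'M[K]_p) : (kermx (S *m A *m Q) :=: kermx A *m Q)%MS.
Proof.
apply/eqmxP/andP; split; last first.
  by rewrite sub_kermx !mulmxA (mulmxKV S_unit) mulmx_ker !mul0mx.
rewrite -[X in (X <= _)%MS](mulmxK S_unit) submxMr // sub_kermx.
have /(congr1 (mulmx^~ S)) := mulmx_ker (S *m A *m Q).
by rewrite !mulmxA (mulmxKV S_unit) mul0mx => ->.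
Qed.

Lemma in_Aut_conj B P g :
  in_Aut B P g -> in_Aut (S *m B *m S^T) (S *m P *m Q) (S *m g *m Q).
Proof.
move=> [g_unit [/isometry_mxP gBg Pg]].
split; first by rewrite !unitmx_mul g_unit S_unit unitmx_inv S_unit.
split; last by rewrite !mulmxA !(mulmxKV S_unit) -(mulmxA S P) Pg !mulmxA.
apply/isometry_mxP; rewrite !trmx_mul !mulmxA (mulmxKV S_unit).
rewrite -[(S *m g *m B *m S^T *m Q^T)]mulmxA -trmx_mul mulVmx // trmx1 mulmx1.
by rewrite -(mulmxA S g) -(mulmxA S (g *m B)) gBg.
Qed.

End ChangeOfBasis.

Lemma Aut_invariant_conj (K : fieldType) (p : nat) (S B P U : 'M[K]_p) :
  S \in unitmx -> Aut_invariant B P U ->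
  Aut_invariant (S *m B *m S^T) (S *m P *m invmx S) (U *m invmx S).
Proof.
move=> S_unit invU g Autg; have Q_unit : invmx S \in unitmx by rewrite unitmx_inv.
have := in_Aut_conj Q_unit Autg; rewrite invmxK !mulmxA mulVmx // !mul1mx.
rewrite (mulmxKV S_unit) -(mulmxA B) -trmx_mul mulVmx // trmx1 mulmx1.
move=> /invU /(submxMr (invmx S)); apply: submx_trans.
by rewrite !mulmxA (mulmxK S_unit).
Qed.

Lemma Aut_invariants_are_kernels_conj (K : fieldType) (p k : nat) (S B P : 'M[K]_p) :
  S \in unitmx -> Aut_invariants_are_kernels B P k ->
  Aut_invariants_are_kernels (S *m B *m S^T) (S *m P *m invmx S) k.
Proof.
move=> S_unit [kerP invP]; have Q_unit : invmx S \in unitmx by rewrite unitmx_inv.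
have kerPS i : (kermx ((S *m P *m invmx S) ^+ i) :=: kermx (P ^+ i) *m invmx S)%MS.
  by rewrite conjmxX //; apply: kermx_conj.
split=> [i le_ik | U].
  apply/eqmxP/(eqmx_trans (kerPS i))/eqmx_sym; rewrite conjmxX //.
  by apply/(eqmx_trans (eqmx_conj S_unit _))/eqmx_sym/eqmxMr/eqmxP/kerP.
split=> [/(Aut_invariant_conj Q_unit) | [i le_ik /eqmxP eqU]].
  rewrite invmxK !mulmxA mulVmx // !mul1mx (mulmxKV S_unit) -(mulmxA B) -trmx_mul.
  rewrite mulVmx // trmx1 mulmx1 => /invP [i le_ik /eqmxP eqU].
  exists i => //; apply/eqmxP; rewrite -[U](mulmxK S_unit).
  exact: eqmx_trans (eqmxMr _ eqU) (eqmx_sym (kerPS i)).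
rewrite -[U](mulmxK S_unit); apply: Aut_invariant_conj => //.
apply/invP; exists i => //; apply/eqmxP; rewrite -[kermx _](mulmxKV S_unit).
exact: eqmx_trans (eqmxMr S eqU) (eqmxMr S (kerPS i)).
Qed.

Section MonomialMatrices.
Variables (R : comPzRingType) (n : nat).
Implicit Types (c d : 'I_n -> R) (f g : 'I_n -> 'I_n) (A : 'M[R]_n).

Definition monomx c f : 'M[R]_n := \matrix_(i, j) if j == f i then c i else 0.

Lemma mul_monomx c f A i j : (monomx c f *m A) i j = c i * A (f i) j.
Proof.
rewrite !mxE (bigD1 (f i)) //= mxE eqxx big1 ?addr0 // => l /negbTE nl.
by rewrite mxE nl mul0r.
Qed.

Lemma mulmx_tr_monomx A c f i j : (A *m (monomx c f)^T) i j = A i (f j) * c j.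
Proof.
rewrite !mxE (bigD1 (f j)) //= !mxE eqxx big1 ?addr0 // => l /negbTE nl.
by rewrite !mxE nl mulr0.
Qed.

Lemma mulmx_monomx_invol r (A : 'M[R]_(r, n)) c f : involutive f ->
  forall i j, (A *m monomx c f) i j = A i (f j) * c (f j).
Proof.
move=> fK i j; rewrite !mxE (bigD1 (f j)) //= mxE fK eqxx big1 ?addr0 // => l nl.
by rewrite mxE -(inj_eq (inv_inj fK)) fK eq_sym (negbTE nl) mulr0.
Qed.

Lemma monomxM c f d g : monomx c f *m monomx d g = monomx (fun i => c i * d (f i)) (g \o f).
Proof. by apply/matrixP=> i j; rewrite mul_monomx !mxE /=; case: eqP; rewrite ?mulr0. Qed.

Lemma monomxB c d f : monomx c f - monomx d f = monomx (fun i => c i - d i) f.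
Proof. by apply/matrixP=> i j; rewrite !mxE; case: eqP; rewrite ?subr0. Qed.

Lemma monomxZ a c f : a *: monomx c f = monomx (fun i => a * c i) f.
Proof. by apply/matrixP=> i j; rewrite !mxE; case: eqP; rewrite ?mulr0. Qed.

Lemma eq_monomx c d f g : c =1 d -> f =1 g -> monomx c f = monomx d g.
Proof. by move=> cd fg; apply/matrixP=> i j; rewrite !mxE cd fg. Qed.

Lemma scalar_monomx a : a%:M = monomx (fun _ => a) id.
Proof. by apply/matrixP=> i j; rewrite !mxE /= [j == i]eq_sym; case: (i == j). Qed.

Lemma row_monomx c f i : row i (monomx c f) = c i *: delta_mx 0 (f i).
Proof.
apply/rowP=> j; rewrite !mxE eqxx /=.
by case: (j == f i); rewrite ?mulr1 ?mulr0.
Qed.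

Lemma monomx_isometry c f A :
  (forall i j, c i * A (f i) (f j) * c j = A i j) -> monomx c f *m A *m (monomx c f)^T = A.
Proof. by move=> cA; apply/matrixP=> i j; rewrite mulmx_tr_monomx mul_monomx cA. Qed.

End MonomialMatrices.

(* Case analysis on index arithmetic: clamps and innermost conditionals go
   first, so that [lia] only ever sees linear facts. *)
Ltac no_if x := lazymatch x with context [if _ then _ else _] => fail | _ => idtac end.
Ltac no_minn x := lazymatch x with context [minn _ _] => fail | _ => idtac end.

Ltac case_ifs := intros; repeat match goal with
  | |- context [minn ?x ?y] => no_if x; rewrite (minn_idPl (_ : (x <= y)%N)); last by lia
  | H : context [minn ?x ?y] |- _ =>
      no_if x; rewrite (minn_idPl (_ : (x <= y)%N)) in H; last by lia
  | |- context [if ?c then _ else _] =>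
      no_if c; no_minn c; destruct c eqn:?; try (exfalso; lia)
  | H : context [if ?c then _ else _] |- _ =>
      no_if c; no_minn c; destruct c eqn:?; try (exfalso; lia)
  | |- context [if ?c then _ else _] => destruct c eqn:?; try (exfalso; lia)
  | H : context [if ?c then _ else _] |- _ => destruct c eqn:?; try (exfalso; lia)
  end; try (by lia); try ring.

Section StandardForm.
Variables (K : fieldType) (m k : nat).
Hypothesis k_gt0 : (0 < k)%N.
Local Notation n := (m * (2 * k))%N.
Local Notation B0 := (stdB K n k).
Implicit Types (i j : 'I_n).

(* Index [i] is position [pos i] of Jordan block [blk i]; positions [0 .. k-1]
   and [k .. 2k-1] are its two Jordan cells.  The row vector [e_i] is mapped by
   [stdN] to [e_(chain_iter 1 i)], or to [0] when [depth i = 0]: [depth i] is the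
   number of steps [e_i] needs to reach [kermx stdN]. *)
Definition blk i := (i %/ (2 * k))%N.
Definition pos i := (i %% (2 * k))%N.

Lemma pos_lt i : (pos i < 2 * k)%N.
Proof. by rewrite ltn_pmod // muln_gt0 k_gt0. Qed.

Lemma blk_lt i : (blk i < m)%N.
Proof. by rewrite ltn_divLR ?muln_gt0 ?k_gt0. Qed.

Lemma idx_eq i j : (i == j) = (blk i == blk j) && (pos i == pos j).
Proof.
apply/eqP/andP => [-> // | [/eqP eq_blk /eqP eq_pos]].
apply/val_inj; rewrite /= (divn_eq i (2 * k)) (divn_eq j (2 * k)).
by congr (_ * _ + _)%N; [exact: eq_blk | exact: eq_pos].
Qed.

(* The clamps only make [relabel] total: all relabellings used below stay in
   range, and [case_ifs] discharges the clamps. *)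
Definition relabel (h g : nat -> nat) i : 'I_n :=
  insubd i (minn (h (blk i)) m.-1 * (2 * k) + minn (g (pos i)) (2 * k).-1)%N.

Lemma relabel_val h g i :
  val (relabel h g i) = (minn (h (blk i)) m.-1 * (2 * k) + minn (g (pos i)) (2 * k).-1)%N.
Proof.
rewrite val_insubd ifT //; have := blk_lt i.
set q := minn _ _; set c := minn _ _ => lt_blk.
have lt_qm : (q < m)%N by rewrite /q; lia.
apply: (@leq_trans (q.+1 * (2 * k))); first by rewrite mulSn /c; lia.
by rewrite leq_mul2r lt_qm orbT.
Qed.

Lemma blk_relabel h g i : blk (relabel h g i) = minn (h (blk i)) m.-1.
Proof.
by rewrite /blk relabel_val divnMDl ?muln_gt0 ?k_gt0 // divn_small ?addn0 //; lia.
Qed.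

Lemma pos_relabel h g i : pos (relabel h g i) = minn (g (pos i)) (2 * k).-1.
Proof. by rewrite /pos relabel_val modnMDl modn_small //; lia. Qed.

Definition repos g := relabel (fun q => q) g.
Definition reblk h := relabel h (fun a => a).

Lemma blk_repos g i : blk (repos g i) = blk i.
Proof. by rewrite blk_relabel; have := blk_lt i; lia. Qed.

Lemma pos_repos g i : pos (repos g i) = minn (g (pos i)) (2 * k).-1.
Proof. exact: pos_relabel. Qed.

Lemma blk_reblk h i : blk (reblk h i) = minn (h (blk i)) m.-1.
Proof. exact: blk_relabel. Qed.

Lemma pos_reblk h i : pos (reblk h i) = pos i.
Proof. by rewrite pos_relabel; have := pos_lt i; lia. Qed.

Definition depth i := if (pos i < k)%N then (k.-1 - pos i)%N else (pos i - k)%N.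
Definition partner := repos (fun a => if (a < k)%N then a + k else a - k)%N.
Definition chain_iter (t : nat) := repos (fun a => if (a < k)%N then a + t else a - t)%N.

Ltac idx_simpl := rewrite ?idx_eq /depth ?(blk_repos, pos_repos, blk_reblk, pos_reblk) /=.
Ltac gen_idx i := move: (blk_lt i) (pos_lt i); move: (blk i) (pos i).

Definition sgn i : K := if (pos i < k)%N then 1 else -1.
Definition stdN := monomx (fun i => if depth i == 0%N then 0 else 1 : K) (chain_iter 1%N).

Lemma stdB_monomx : B0 = monomx sgn partner.
Proof.
apply/matrixP=> i j; rewrite !mxE /blockB -/(blk i) -/(blk j) -/(pos i) -/(pos j).
idx_simpl; rewrite /sgn; gen_idx i; gen_idx j; case_ifs.
Qed.

Lemma stdN_stdB : stdN *m B0 = stdA K n k.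
Proof.
apply/matrixP=> i j; rewrite mul_monomx !mxE /blockB /blockA /jordan0.
rewrite -/(blk i) -/(blk j) -/(pos i) -/(pos j).
rewrite -/(blk (chain_iter 1%N i)) -/(pos (chain_iter 1%N i)).
idx_simpl; gen_idx i; gen_idx j; case_ifs.
Qed.

Lemma stdB_unit : B0 \in unitmx.
Proof.
suff /mulmx1_unit [] : B0 *m (- B0) = 1%:M by [].
rewrite mulmxN -scaleN1r stdB_monomx monomxM monomxZ scalar_monomx.
apply: eq_monomx => i; last first.
  by apply/eqP; rewrite /= /partner; idx_simpl; gen_idx i; case_ifs.
by rewrite /sgn /partner; idx_simpl; gen_idx i; case_ifs.
Qed.

Lemma depth_lt i : (depth i < k)%N.
Proof. by rewrite /depth; gen_idx i; case_ifs. Qed.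

Lemma depth_chain_step i : (0 < depth i)%N -> depth (chain_iter 1%N i) = (depth i).-1.
Proof. by rewrite /chain_iter; idx_simpl; gen_idx i; case_ifs. Qed.

Lemma chain_iter0 i : chain_iter 0%N i = i.
Proof. by apply/eqP; rewrite /chain_iter; idx_simpl; gen_idx i; case_ifs. Qed.

Lemma chain_iterS t i :
  (t < depth i)%N -> chain_iter t (chain_iter 1%N i) = chain_iter t.+1 i.
Proof.
move=> lt_ti; apply/eqP; move: lt_ti; rewrite /chain_iter.
by idx_simpl; gen_idx i; case_ifs.
Qed.

Lemma row_stdNX t i :
  row i (stdN ^+ t) = if (t <= depth i)%N then delta_mx 0 (chain_iter t i) else 0.
Proof.
elim: t i => [|t IHt] i; first by rewrite expr0 row1 chain_iter0.
rewrite exprS -mulmxE row_mul row_monomx -scalemxAl -rowE IHt.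
have [-> | depth_gt0] := posnP (depth i); first by rewrite scale0r.
rewrite scale1r depth_chain_step // -ltnS prednK //.
by case: ifP => // lt_ti; rewrite chain_iterS.
Qed.

Lemma stdN_nilpotent : stdN ^+ k = 0.
Proof.
apply/row_matrixP => i; rewrite row_stdNX row0.
by have := depth_lt i; case: leqP.
Qed.

Lemma kermx_stdN_coord r (w : 'M[K]_(r, n)) s j :
  w *m stdN = 0 -> (0 < depth j)%N -> w s j = 0.
Proof.
move=> wN depth_gt0; have := congr1 (fun M : 'M_(r, n) => M s (chain_iter 1%N j)) wN.
rewrite !mxE (bigD1 j) //= big1 ?addr0 => [|l ne_lj].
  by rewrite mxE eqxx gtn_eqF // mulr1.
rewrite mxE; case: ifP => [step_eq|]; last by rewrite mulr0.
have [_ | depth_l] := posnP (depth l); first by rewrite /= mulr0.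
case/negP: ne_lj; move: step_eq depth_l depth_gt0; rewrite /chain_iter /depth.
by idx_simpl; gen_idx j; gen_idx l; case_ifs.
Qed.

Lemma kermx_stdN_proj r (w : 'M[K]_(r, n)) : w *m stdN = 0 ->
  w *m monomx (fun i => if depth i == 0%N then 1 else 0) id = w.
Proof.
move=> wN; apply/matrixP => s j; rewrite mulmx_monomx_invol //.
by have [_ | depth_j] := posnP (depth j); rewrite ?mulr1 // mulr0 (kermx_stdN_coord _ wN).
Qed.

Lemma kermx_stdN_sub r (A : 'M[K]_(r, n)) :
  (forall i, depth i = 0%N -> ((delta_mx 0 i : 'rV_n) <= A)%MS) -> (kermx stdN <= A)%MS.
Proof.
move=> sub_delta; rewrite -(kermx_stdN_proj (mulmx_ker stdN)).
apply: submx_trans (submxMl _ _) _; apply/row_subP => i; rewrite row_monomx.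
by case: eqP => [/sub_delta | _]; rewrite ?scale1r // scale0r sub0mx.
Qed.

Lemma kermx_stdN_im : (kermx stdN <= stdN ^+ k.-1)%MS.
Proof.
apply: kermx_stdN_sub => i depth_i.
pose i0 := repos (fun a => if (a < k)%N then 0%N else (2 * k).-1) i.
have [le_k1 chain_i0] : (k.-1 <= depth i0)%N /\ chain_iter k.-1 i0 = i.
  by split; [|apply/eqP]; move: depth_i; rewrite /i0 /chain_iter /depth;
    idx_simpl; gen_idx i; case_ifs.
by have := row_stdNX k.-1 i0; rewrite le_k1 chain_i0 => <-; apply: row_sub.
Qed.

Definition flip := repos (fun a => (2 * k).-1 - a)%N.
Definition sigma_mx := monomx sgn flip.
Definition Z_mx := monomx (fun i => if (pos i < k.-1)%N then 1 else 0 : K)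
                          (repos (fun a => 2 * k - 2 - a)%N).
Definition blk_swap q1 q2 :=
  reblk (fun q => if q == q1 then q2 else if q == q2 then q1 else q).
Definition swap_mx q1 q2 := monomx (fun _ => 1 : K) (blk_swap q1 q2).

Lemma flipK : involutive flip.
Proof. by move=> i; apply/eqP; rewrite /flip; idx_simpl; gen_idx i; case_ifs. Qed.

Lemma std_Aut_alg g : g *m B0 *m g^T = B0 -> comm_mx stdN g -> Aut_alg B0 stdN g.
Proof. by move=> gB Ng; apply/Aut_alg_Aut/in_Aut_mx => //; apply: stdB_unit. Qed.

Lemma sigma_Aut_alg : Aut_alg B0 stdN sigma_mx.
Proof.
apply: std_Aut_alg.
  rewrite stdB_monomx; apply: monomx_isometry => i j.
  by rewrite !mxE /sgn /flip /partner; idx_simpl; gen_idx i; gen_idx j; case_ifs.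
apply/matrixP => i j; rewrite /comm_mx !monomxM !mxE /sgn /flip /chain_iter /depth.
by idx_simpl; gen_idx i; case_ifs.
Qed.

Lemma Z_isotropic : Z_mx *m B0 *m Z_mx^T = 0.
Proof.
apply/matrixP => i j; rewrite stdB_monomx mulmx_tr_monomx mul_monomx !mxE /partner.
by idx_simpl; gen_idx i; gen_idx j; case_ifs.
Qed.

Lemma Z_skew : Z_mx *m B0 = - (B0 *m Z_mx^T).
Proof.
apply/matrixP => i j; rewrite [(- _ : 'M[K]_n) _ _]mxE stdB_monomx mulmx_tr_monomx.
rewrite mul_monomx !mxE /sgn /partner.
by idx_simpl; gen_idx i; gen_idx j; case_ifs.
Qed.

Lemma Z_Aut_alg : Aut_alg B0 stdN Z_mx.
Proof.
have : Aut_alg B0 stdN (1%:M + Z_mx).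
  apply: std_Aut_alg.
    rewrite raddfD /= trmx1 mulmxDl mul1mx !mulmxDr !mulmx1 mulmxDl Z_isotropic Z_skew.
    by rewrite addr0 subrK.
  rewrite /comm_mx mulmxDl mulmxDr mul1mx mulmx1 !monomxM; congr (_ + _).
  apply/matrixP => i j; rewrite !mxE /chain_iter /depth.
  by idx_simpl; gen_idx i; case_ifs.
by move/(Aut_alg_sub_scalar 1); rewrite [1%:M + _]addrC addrK.
Qed.

Lemma stdN_Aut_alg : Aut_alg B0 stdN stdN.
Proof.
have {2}-> : stdN = (-1) *: (Z_mx *m sigma_mx + sigma_mx *m Z_mx).
  apply/matrixP => i j; rewrite !monomxM !mxE /sgn /flip /chain_iter /depth.
  by idx_simpl; gen_idx i; case_ifs.
apply/Aut_alg_scale/Aut_alg_add; apply: Aut_alg_mul;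
  by [apply: Z_Aut_alg | apply: sigma_Aut_alg].
Qed.

Lemma swap_Aut_alg q1 q2 : (q1 < m)%N -> (q2 < m)%N -> Aut_alg B0 stdN (swap_mx q1 q2).
Proof.
move=> lt_q1 lt_q2; apply: std_Aut_alg.
  rewrite stdB_monomx; apply: monomx_isometry => i j.
  by rewrite !mxE /sgn /blk_swap /partner; idx_simpl; gen_idx i; gen_idx j; case_ifs.
apply/matrixP => i j; rewrite /comm_mx !monomxM !mxE /blk_swap /chain_iter /depth.
by idx_simpl; gen_idx i; case_ifs.
Qed.

Definition scale_mx q :=
  monomx (fun i => if blk i == q then (if (pos i < k)%N then 2 else 2^-1) else 1 : K) id.
Definition proj_mx q :=
  monomx (fun i => if (blk i == q) && (pos i < k)%N then 1 else 0 : K) id.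

(* [scale_mx q] has eigenvalues [2], [2^-1] and [1], and [proj_mx q] is its
   spectral projection for [2]; this needs [2] and [3 = 2 * (2 - 2^-1)] to be
   invertible. *)
Hypotheses (two_neq0 : (2 : K) != 0) (three_neq0 : (3 : K) != 0).

Lemma scale_Aut_alg q : Aut_alg B0 stdN (scale_mx q).
Proof.
apply: std_Aut_alg.
  rewrite stdB_monomx; apply: monomx_isometry => i j.
  by rewrite !mxE /sgn /partner; idx_simpl; gen_idx i; gen_idx j; case_ifs; field.
rewrite /comm_mx !monomxM; apply: eq_monomx => // i.
by rewrite /= /chain_iter; idx_simpl; gen_idx i; case_ifs.
Qed.

Lemma proj_Aut_alg q : Aut_alg B0 stdN (proj_mx q).
Proof.
have -> : proj_mx q = (2 - 2^-1)^-1 *: ((scale_mx q - 1%:M) *m (scale_mx q - (2^-1)%:M)).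
  rewrite !scalar_monomx !monomxB monomxM monomxZ; apply: eq_monomx => // i /=.
  by case_ifs; field; rewrite ?two_neq0.
by apply/Aut_alg_scale/Aut_alg_mul; apply/Aut_alg_sub_scalar/scale_Aut_alg.
Qed.

Lemma kermx_stdN_nz_entry (w : 'rV[K]_n) : w != 0 -> w *m stdN = 0 ->
  exists C i1, [/\ Aut_alg B0 stdN C, pos i1 = k.-1 & (w *m C) 0 i1 != 0].
Proof.
move=> w_nz wN; have [j wj] : exists j, w 0 j != 0.
  apply/existsP; apply: contraR w_nz => /existsPn w0.
  by apply/eqP/rowP => j; rewrite mxE; apply/eqP/negPn/w0.
have depth_j : depth j = 0%N.
  apply/eqP; apply: contraR wj; rewrite -lt0n => /(kermx_stdN_coord 0 wN) ->.
  by rewrite eqxx.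
case: (ltnP (pos j) k) => pos_j.
  exists 1%:M, j; split; [exact: Aut_alg1 | | by rewrite mulmx1].
  by move: depth_j; rewrite /depth pos_j; lia.
exists sigma_mx, (flip j); split; first exact: sigma_Aut_alg.
  by move: depth_j pos_j; rewrite /flip /depth; idx_simpl; gen_idx j; case_ifs.
by rewrite (mulmx_monomx_invol _ _ flipK) flipK /sgn ltnNge pos_j mulrN1 oppr_eq0.
Qed.

Lemma kermx_stdN_proj_entry (w : 'rV[K]_n) i1 : w *m stdN = 0 -> pos i1 = k.-1 ->
  w *m proj_mx (blk i1) = w 0 i1 *: delta_mx 0 i1.
Proof.
move=> wN pos_i1; apply/rowP => j; rewrite mulmx_monomx_invol // !mxE.
have [-> | ne_ji1] := eqVneq j i1.
  by rewrite !eqxx pos_i1 ltn_predL k_gt0.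
rewrite andbF mulr0; case: ifP => [/andP [/eqP blk_j pos_j] | _]; last first.
  by rewrite mulr0.
rewrite (kermx_stdN_coord _ wN) ?mul0r //.
by move: ne_ji1; rewrite idx_eq blk_j pos_i1 eqxx /depth pos_j /=; lia.
Qed.

Lemma delta_stdN_reach i1 i : pos i1 = k.-1 -> depth i = 0%N ->
  exists2 C, Aut_alg B0 stdN C & (delta_mx 0 i1 : 'rV_n) *m C = delta_mx 0 i.
Proof.
move=> pos_i1 depth_i; pose i2 := blk_swap (blk i1) (blk i) i1.
have swap_i1 : (delta_mx 0 i1 : 'rV_n) *m swap_mx (blk i1) (blk i) = delta_mx 0 i2.
  by rewrite -rowE row_monomx scale1r.
have [blk_i2 pos_i2] : blk i2 = blk i /\ pos i2 = k.-1.
  by rewrite /i2 pos_reblk blk_reblk eqxx; have := blk_lt i; split => //; lia.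
have swap_alg := swap_Aut_alg (blk_lt i1) (blk_lt i).
case: (ltnP (pos i) k) => pos_i.
  exists (swap_mx (blk i1) (blk i)); rewrite // swap_i1; congr delta_mx.
  by apply/eqP; rewrite idx_eq blk_i2 pos_i2 eqxx; move: depth_i; rewrite /depth pos_i; lia.
exists (swap_mx (blk i1) (blk i) *m sigma_mx); first exact/Aut_alg_mul/sigma_Aut_alg.
rewrite mulmxA swap_i1 -rowE row_monomx /sgn pos_i2 ltn_predL k_gt0 scale1r.
congr delta_mx; apply/eqP; rewrite idx_eq /flip blk_repos pos_repos blk_i2 pos_i2 eqxx.
by move: depth_i pos_i; rewrite /depth; have := pos_lt i; case_ifs.
Qed.

Lemma kermx_stdN_generated (w : 'rV[K]_n) r (V : 'M[K]_(r, n)) :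
  w != 0 -> w *m stdN = 0 -> (forall C, Aut_alg B0 stdN C -> (w *m C <= V)%MS) ->
  (kermx stdN <= V)%MS.
Proof.
move=> w_nz wN wCV; have [C [i1 [algC pos_i1 wCi1]]] := kermx_stdN_nz_entry w_nz wN.
have wCN : w *m C *m stdN = 0 by rewrite -mulmxA -(Aut_alg_comm algC) mulmxA wN mul0mx.
apply: kermx_stdN_sub => i depth_i; have [D algD i1D] := delta_stdN_reach pos_i1 depth_i.
have -> : delta_mx 0 i = ((w *m C) 0 i1)^-1 *: (w *m (C *m proj_mx (blk i1) *m D)).
  by rewrite !mulmxA kermx_stdN_proj_entry // -scalemxAl i1D scalerA mulVf // scale1r.
apply/scalemx_sub/wCV/Aut_alg_mul => //.
exact/Aut_alg_mul/proj_Aut_alg.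
Qed.

Theorem stdN_Aut_invariants_are_kernels : Aut_invariants_are_kernels B0 stdN k.
Proof.
exact: Aut_invariants_are_kernels_of_generated stdN_nilpotent kermx_stdN_im stdN_Aut_alg
  kermx_stdN_generated.
Qed.

End StandardForm.

Lemma real_or_complex_natr_eq0 (K : fieldType) :
  real_or_complex K -> forall p, (p%:R == 0 :> K) = (p == 0)%N.
Proof.
have natr_eq0 (F : numDomainType) (f : {rmorphism F -> K}) p :
    bijective f -> (p%:R == 0 :> K) = (p == 0)%N.
  by move/bij_inj => f_inj; rewrite -(rmorph_nat f) -(rmorph0 f) (inj_eq f_inj) pnatr_eq0.
by case=> R [[f /natr_eq0] | [f /natr_eq0]].
Qed.

Lemma jordan_blocks_std_form (K : fieldType) (m k : nat) (B P : 'M[K]_(m * (2 * k))) :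
  (0 < k)%N -> jordan_blocks_of_height B P k ->
  exists2 Q, Q \in unitmx & B = Q *m stdB K _ k *m Q^T /\ P = Q *m stdN K m k *m invmx Q.
Proof.
move=> k_gt0 [_ [S [S_unit [SB SPB]]]]; exists (invmx S); first by rewrite unitmx_inv.
have eB : B = invmx S *m stdB K _ k *m (invmx S)^T.
  by rewrite -SB !mulmxA mulVmx // mul1mx -mulmxA -trmx_mul mulVmx // trmx1 mulmx1.
split => //; rewrite invmxK.
have BS_unit : B *m S^T \in unitmx.
  by rewrite eB !unitmx_mul !unitmx_tr unitmx_inv S_unit stdB_unit.
have SP : S *m P = stdN K m k *m S.
  apply: (can_inj (mulmxK BS_unit)); rewrite !mulmxA -(mulmxA S P B) SPB.
  by rewrite -(stdN_stdB K m k_gt0) -SB !mulmxA.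
by rewrite -[P](mulKmx S_unit) SP mulmxA.
Qed.

Lemma Aut_invariants_are_kernels_dim0 (K : fieldType) (k : nat) (B P : 'M[K]_0) :
  Aut_invariants_are_kernels B P k.
Proof.
split=> [i _ | U]; first by rewrite !flatmx0 submx_refl.
by split=> [_ | _ g _]; [exists 0%N | ]; rewrite ?flatmx0 ?submx_refl.
Qed.

Theorem corollary1 (K : fieldType) (n k : nat) (B P : 'M[K]_n) :
  real_or_complex K ->
  symplectic B ->
  nilpotent_mx P ->
  self_adjoint B P ->
  jordan_blocks_of_height B P k ->
  (forall i : nat, (i <= k)%N -> (kermx (P ^+ i) == P ^+ (k - i))%MS) /\
  (forall U : 'M[K]_n,
     Aut_invariant B P U <-> exists2 i : nat, (i <= k)%N & (U == kermx (P ^+ i))%MS).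
Proof.
(* The block decomposition alone implies the other three hypotheses. *)
move=> /real_or_complex_natr_eq0 natr_eq0 _ _ _ blocks.
have [/dvdnP [m n_eq] _] := blocks.
have [k0 | k_gt0] := posnP k.
  move: B P blocks; rewrite n_eq k0 !muln0 => B P _.
  exact: Aut_invariants_are_kernels_dim0.
subst n; have [Q Q_unit [-> ->]] := jordan_blocks_std_form k_gt0 blocks.
apply: Aut_invariants_are_kernels_conj Q_unit _.
by apply: stdN_Aut_invariants_are_kernels; rewrite ?natr_eq0.
Qed.
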